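(* Let $A=\mathrm{diag}(\lambda_1,\dots,\lambda_k)$ with distinct real $\lambda_j$, $|\lambda_j|>1$, let $h\ne0$, $p\ge0$, and let $\bar\Gamma\in\mathbb R^{1\times k}$ be a row vector with all entries nonzero. Let $\tilde J$ be the unique solution of $$\tilde J=A^{-1}\tilde JA^{-T}-\frac{\bar\Gamma^T\bar\Gamma}{1+h^2p}+A^{-1}\bar\Gamma^T\bar\Gamma A^{-T}.$$ Then, with $D_\Gamma=\mathrm{diag}(\bar\Gamma)$ (the diagonal matrix with the entries of $\bar\Gamma$ on its diagonal) and $M$ the solution of $M=A^{-1}MA^{-T}+\mathbf 1\mathbf 1^T$, $$\tilde J=D_\Gamma\Big(\frac{h^2p}{1+h^2p}M-\mathbf 1\mathbf 1^T\Big)D_\Gamma,$$ and $\tilde J\succ0$ if and only if $1+h^2p>|\det A|^2$, i.e. $\sum_{j=1}^k\log|\lambda_j|<\tfrac12\log(1+h^2p)$.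
   Context: $\mathbf 1\in\mathbb R^k$ denotes the all-ones vector. *)

From HB Require Import structures.
From mathcomp Require Import all_boot all_order all_algebra.
From mathcomp Require Import all_classical all_reals all_analysis.
Set Implicit Arguments. Unset Strict Implicit. Unset Printing Implicit Defensive.
Import Order.TTheory GRing.Theory Num.Theory.
Local Open Scope ring_scope.

Definition posdef (R : realType) (k : nat) (J : 'M[R]_k) : Prop :=
  J^T = J /\ forall x : 'cV[R]_k, x != 0 -> 0 < (x^T *m J *m x) 0 0.

From HB Require Import structures.
From mathcomp Require Import all_boot all_order all_algebra.
From mathcomp Require Import all_classical all_reals all_analysis.
From mathcomp Require Import ring lra.
Import Order.TTheory GRing.Theory Num.Theory.
Local Open Scope ring_scope.
Set Implicit Arguments. Unset Strict Implicit. Unset Printing Implicit Defensive.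

(* With b_j = 1 / lambda_j, the Stein equations are solved entrywise:
   M_ij = 1 / (1 - b_i b_j), and J is the congruence by diag(Gamma) of
   (1 - 1/c) M - 11^T, where c = 1 + h^2 p.  Writing y_i = Gamma_i x_i, the
   quadratic form of J is (1 - 1/c) Q(y) - S(y)^2, where
   Q(y) = sum_ij y_i y_j / (1 - b_i b_j) = sum_n (sum_i y_i b_i^n)^2 is the
   squared Hardy-space norm of f = sum_i y_i / (1 - b_i z) and S(y) = f(0).
   The best constant in S(y)^2 <= C Q(y) is 1 - |B(0)|^2 = 1 - prod_i b_i^2,
   where B is the Blaschke product with zeros b_i; it is attained when the b_i
   are distinct and nonzero.  Hence J > 0 iff prod_i b_i^2 > 1/c, that is
   |det A|^2 < c.  The extremal inequality is proved by induction on k,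
   splitting off the zero b_k with the Moebius map z |-> (z - b_k)/(1 - b_k z). *)

Lemma oneBM_neq0 (R : realDomainType) (x y : R) :
  `|x| < 1 -> `|y| < 1 -> 1 - x * y != 0.
Proof.
move=> x_lt1 y_lt1; rewrite subr_eq0 eq_sym lt_eqF //.
by apply: le_lt_trans (ler_norm _) _; rewrite normrM -[1]mulr1 ltr_pM.
Qed.

Section CauchyForm.
Variables (R : realFieldType) (b : nat -> R).
Hypothesis b_lt1 : forall i, `|b i| < 1.

Definition cauchy_form k (x : nat -> R) :=
  \sum_(i < k) \sum_(j < k) x i * x j / (1 - b i * b j).
Definition coord_sum k (x : nat -> R) := \sum_(i < k) x i.
Definition prod_sqr k := \prod_(i < k) b i ^+ 2.
Definition mobius (c z : R) := (z - c) / (1 - c * z).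
Definition cauchy_lin k (x : nat -> R) := \sum_(i < k.+1) x i / (1 - b i * b k).
Definition mobius_reduce k (x : nat -> R) i := mobius (b k) (b i) * x i.
Definition distinct_nodes k :=
  forall i j, (i < k)%N -> (j < k)%N -> i != j -> b i != b j.

Lemma eq_cauchy_form k x y : (forall i, (i < k)%N -> x i = y i) ->
  cauchy_form k x = cauchy_form k y.
Proof. by move=> xy; apply: eq_bigr => i _; apply: eq_bigr => j _; rewrite !xy. Qed.

Lemma eq_coord_sum k x y : (forall i, (i < k)%N -> x i = y i) ->
  coord_sum k x = coord_sum k y.
Proof. by move=> xy; apply: eq_bigr => i _; rewrite xy. Qed.

Lemma cauchy_den_neq0 i j : 1 - b i * b j != 0.
Proof. exact: oneBM_neq0. Qed.

Lemma sqr_b_lt1 i : b i ^+ 2 < 1.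
Proof. by rewrite -real_normK ?num_real // expr_lt1. Qed.

Lemma mobius_reduce_self k x : mobius_reduce k x k = 0.
Proof. by rewrite /mobius_reduce /mobius subrr !mul0r. Qed.

Lemma mobius_reduce_widen k x :
  \sum_(i < k.+1) mobius_reduce k x i = \sum_(i < k) mobius_reduce k x i.
Proof. by rewrite big_ord_recr /= mobius_reduce_self addr0. Qed.

Lemma cauchy_formS k x : cauchy_form k.+1 x
  = (1 - b k ^+ 2) * cauchy_lin k x ^+ 2 + cauchy_form k (mobius_reduce k x).
Proof.
have -> : cauchy_form k (mobius_reduce k x) = cauchy_form k.+1 (mobius_reduce k x).
  rewrite /cauchy_form big_ord_recr /= [X in _ + X]big1 ?addr0 => [|j _]; last first.
    by rewrite mobius_reduce_self !mul0r.
  by apply: eq_bigr => i _; rewrite big_ord_recr /= mobius_reduce_self mulr0 mul0r addr0.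
rewrite [cauchy_lin _ _ ^+ 2]expr2 /cauchy_form /cauchy_lin mulr_suml mulr_sumr -big_split /=.
apply: eq_bigr => i _; rewrite !mulr_sumr -big_split /=; apply: eq_bigr => j _.
rewrite /mobius_reduce /mobius.
have := cauchy_den_neq0 i j; have := cauchy_den_neq0 i k; have := cauchy_den_neq0 j k.
have := cauchy_den_neq0 k i; have := cauchy_den_neq0 k j => d1 d2 d3 d4 d5.
by field; rewrite ?d1 ?d2 ?d3 ?d4 ?d5.
Qed.

Lemma coord_sumS k x : coord_sum k.+1 x
  = (1 - b k ^+ 2) * cauchy_lin k x - b k * coord_sum k (mobius_reduce k x).
Proof.
rewrite /coord_sum -mobius_reduce_widen /cauchy_lin !mulr_sumr -sumrB.
apply: eq_bigr => i _; rewrite /mobius_reduce /mobius.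
have := cauchy_den_neq0 i k; have := cauchy_den_neq0 k i => d1 d2.
by field; rewrite ?d1 ?d2.
Qed.

Lemma cauchy_form_ge0 k x : 0 <= cauchy_form k x.
Proof.
elim: k x => [|k IH] x; first by rewrite /cauchy_form big_ord0.
rewrite cauchy_formS addr_ge0 // mulr_ge0 ?sqr_ge0 //.
by rewrite subr_ge0 ltW ?sqr_b_lt1.
Qed.

Lemma mobius_neq0 k i : distinct_nodes k.+1 -> (i < k)%N -> mobius (b k) (b i) != 0.
Proof.
move=> b_inj lt_ik; rewrite /mobius mulf_eq0 invr_eq0 (negbTE (cauchy_den_neq0 _ _)) orbF subr_eq0.
by apply: b_inj => //; [exact: ltnW | rewrite neq_ltn lt_ik].
Qed.

Lemma distinct_nodesW k : distinct_nodes k.+1 -> distinct_nodes k.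
Proof. by move=> b_inj i j lt_ik lt_jk; apply: b_inj; exact: ltnW. Qed.

Lemma cauchy_form_eq0 k x : distinct_nodes k ->
  cauchy_form k x = 0 -> forall i, (i < k)%N -> x i = 0.
Proof.
elim: k x => [|k IH] x b_inj //; rewrite cauchy_formS => Q0.
have w_gt0 : 0 < 1 - b k ^+ 2 by rewrite subr_gt0 sqr_b_lt1.
have [lin0 red0] : cauchy_lin k x = 0 /\ cauchy_form k (mobius_reduce k x) = 0.
  have wF_ge0 : 0 <= (1 - b k ^+ 2) * cauchy_lin k x ^+ 2 by rewrite mulr_ge0 ?sqr_ge0 ?ltW.
  move/eqP: Q0; rewrite paddr_eq0 ?cauchy_form_ge0 //.
  by rewrite mulf_eq0 (gt_eqF w_gt0) sqrf_eq0 /= => /andP[/eqP-> /eqP->].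
have x_lt : forall i, (i < k)%N -> x i = 0.
  move=> i lt_ik; have /eqP := IH _ (distinct_nodesW b_inj) red0 i lt_ik.
  by rewrite mulf_eq0 (negbTE (mobius_neq0 b_inj lt_ik)) => /eqP.
move=> i; rewrite ltnS leq_eqVlt => /orP[/eqP->|]; last exact: x_lt.
move: lin0; rewrite /cauchy_lin big_ord_recr /= big1 => [|j _]; last by rewrite x_lt ?mul0r.
by rewrite add0r => /eqP; rewrite mulf_eq0 invr_eq0 (negbTE (cauchy_den_neq0 k k)) orbF => /eqP.
Qed.

Lemma prod_sqr_ge0 k : 0 <= prod_sqr k.
Proof. by apply: prodr_ge0 => i _; exact: sqr_ge0. Qed.

Lemma prod_sqr_le1 k : prod_sqr k <= 1.
Proof. by apply: prodr_ile1 => i _; rewrite sqr_ge0 ltW ?sqr_b_lt1. Qed.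

Lemma prod_sqr_lt1 k : (0 < k)%N -> prod_sqr k < 1.
Proof.
case: k => // k _; rewrite /prod_sqr big_ord_recr /=.
by apply: le_lt_trans (sqr_b_lt1 k); rewrite ler_piMl ?sqr_ge0 ?prod_sqr_le1.
Qed.

Lemma coord_sum_sqr_le k x :
  coord_sum k x ^+ 2 <= (1 - prod_sqr k) * cauchy_form k x.
Proof.
elim: k x => [|k IH] x; first by rewrite /coord_sum /cauchy_form !big_ord0 expr0n /= mulr0.
have IHx := IH (mobius_reduce k x); have Q'_ge0 := cauchy_form_ge0 k (mobius_reduce k x).
rewrite cauchy_formS coord_sumS /prod_sqr big_ord_recr /= -/(prod_sqr k).
move: IHx Q'_ge0 (prod_sqr_ge0 k) (prod_sqr_le1 k) (sqr_b_lt1 k) (sqr_ge0 (b k)).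
set S := coord_sum k _; set Q := cauchy_form k _; set P := prod_sqr k.
set F := cauchy_lin k x; set c := b k => IHx Q_ge0 P_ge0 P_le1 c2_lt1 c2_ge0.
have [P1|P_neq1] := eqVneq P 1.
  have S0 : S = 0.
    by apply/eqP; rewrite -sqrf_eq0 eq_le sqr_ge0 andbT; move: IHx; rewrite P1 subrr mul0r.
  by rewrite P1 S0 mul1r mulr0 subr0; nra.
have P_lt1 : 0 < 1 - P by rewrite subr_gt0 lt_neqAle P_neq1.
(* Completing the square in F. *)
rewrite -subr_ge0.
have -> : (1 - P * c ^+ 2) * ((1 - c ^+ 2) * F ^+ 2 + Q) - ((1 - c ^+ 2) * F - c * S) ^+ 2
  = ((1 - c ^+ 2) * (c * (1 - P) * F + S) ^+ 2
     + (1 - P * c ^+ 2) * ((1 - P) * Q - S ^+ 2)) / (1 - P).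
  by field; rewrite gt_eqF.
apply: divr_ge0; last exact: ltW.
apply: addr_ge0; first by rewrite mulr_ge0 ?sqr_ge0 // subr_ge0 ltW.
apply: mulr_ge0; last by rewrite subr_ge0.
by rewrite subr_ge0 -[1]mulr1 ler_pM // ltW.
Qed.

Lemma coord_sum_sqr_extremal k : distinct_nodes k -> (forall i, (i < k)%N -> b i != 0) ->
  (0 < k)%N -> exists2 x, (exists2 i, (i < k)%N & x i != 0) &
    coord_sum k x ^+ 2 = (1 - prod_sqr k) * cauchy_form k x.
Proof.
elim: k => [//|k IH] b_inj b_neq0 _.
have [k0|k_gt0] := posnP k.
  exists (fun=> 1); first by exists 0%N; rewrite ?k0 ?oner_neq0.
  rewrite k0 /coord_sum /cauchy_form /prod_sqr !big_ord1 /=.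
  by have := cauchy_den_neq0 0 0 => d; field; rewrite d.
have [y [i0 lt_i0k y_i0] ext_y] :=
  IH (distinct_nodesW b_inj) (fun i lt_ik => b_neq0 i (ltnW lt_ik)) k_gt0.
set S := coord_sum k y in ext_y; set P := prod_sqr k in ext_y.
(* Undo the Moebius reduction on y and choose the last coordinate so that
   cauchy_lin attains the equality case of the completed square. *)
set F := - S / (b k * (1 - P)).
pose x i := if (i < k)%N then y i / mobius (b k) (b i)
  else (1 - b k ^+ 2) * (F - \sum_(j < k) y j / mobius (b k) (b j) / (1 - b j * b k)).
have red_x i : (i < k)%N -> mobius_reduce k x i = y i.
  by move=> lt_ik; rewrite /mobius_reduce /x lt_ik mulrC -mulrA mulVf ?mulr1 ?mobius_neq0.
have S_x : coord_sum k (mobius_reduce k x) = S := eq_coord_sum red_x.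
have Q_x : cauchy_form k (mobius_reduce k x) = cauchy_form k y := eq_cauchy_form red_x.
have lin_x : cauchy_lin k x = F.
  rewrite /cauchy_lin big_ord_recr /= {2}/x ltnn.
  under eq_bigr => j _ do rewrite /x ltn_ord.
  by have := cauchy_den_neq0 k k => d; field; rewrite d.
exists x.
  exists i0; first exact: ltnW.
  by rewrite /x lt_i0k mulf_neq0 // invr_eq0 mobius_neq0.
rewrite cauchy_formS coord_sumS S_x Q_x lin_x /prod_sqr big_ord_recr /= -/(prod_sqr k) -/P.
have P_neq1 : 1 - P != 0 by rewrite subr_eq0 eq_sym lt_eqF // prod_sqr_lt1.
have -> : cauchy_form k y = S ^+ 2 / (1 - P) by rewrite ext_y mulrC mulKf.
by have b_k := b_neq0 k (ltnSn k); rewrite /F; field; rewrite P_neq1 b_k.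
Qed.

End CauchyForm.

Lemma invmx_diag (R : fieldType) n (d : 'rV[R]_n) : (forall i, d 0 i != 0) ->
  invmx (diag_mx d) = diag_mx (\row_i (d 0 i)^-1).
Proof.
move=> d_neq0.
have dd' : diag_mx d *m diag_mx (\row_i (d 0 i)^-1) = 1%:M.
  by rewrite mulmx_diag -diag_const_mx; congr diag_mx; apply/rowP => j; rewrite !mxE divff.
have [d_unit _] := mulmx1_unit dd'.
by rewrite -[RHS]mul1mx -(mulVmx d_unit) -mulmxA dd' mulmx1.
Qed.

Lemma mul_diag_mx_diagE (R : pzRingType) n (d e : 'rV[R]_n) (A : 'M[R]_n) :
  diag_mx d *m A *m diag_mx e = \matrix_(i, j) (d 0 i * A i j * e 0 j).
Proof. by apply/matrixP => i j; rewrite mul_diag_mx mul_mx_diag !mxE. Qed.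

Definition cauchy_mx (R : fieldType) n (d : 'rV[R]_n) : 'M[R]_n :=
  \matrix_(i, j) (1 - d 0 i * d 0 j)^-1.

Section DiagonalStein.
Variables (R : fieldType) (n : nat) (d : 'rV[R]_n).
Hypothesis d_den : forall i j, 1 - d 0 i * d 0 j != 0.

Lemma stein_diag_solution (X C : 'M[R]_n) :
  X = diag_mx d *m X *m diag_mx d + C ->
  X = \matrix_(i, j) (C i j / (1 - d 0 i * d 0 j)).
Proof.
move=> /matrixP eqX; apply/matrixP => i j; rewrite mxE.
apply: (mulIf (d_den i j)); rewrite divfK //.
move: (eqX i j); rewrite mxE mul_diag_mx_diagE mxE => Xij.
by rewrite mulrBr mulr1 {1}Xij; ring.
Qed.

Lemma stein_ones_solution (X : 'M[R]_n) :
  X = diag_mx d *m X *m diag_mx d + const_mx 1 -> X = cauchy_mx d.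
Proof.
by move/stein_diag_solution->; apply/matrixP => i j; rewrite !mxE div1r.
Qed.

Lemma stein_gram_solution (c : R) (g : 'rV[R]_n) (X : 'M[R]_n) : c != 0 ->
  X = diag_mx d *m X *m diag_mx d - c^-1 *: (g^T *m g)
      + diag_mx d *m g^T *m g *m diag_mx d ->
  X = diag_mx g *m ((1 - c^-1) *: cauchy_mx d - const_mx 1) *m diag_mx g.
Proof.
move=> c_neq0; rewrite -addrA => /stein_diag_solution->.
rewrite -[diag_mx d *m g^T *m g]mulmxA !mul_diag_mx_diagE.
apply/matrixP => i j; rewrite !mxE !big_ord1 !mxE.
by have := d_den i j => den; field; rewrite den c_neq0.
Qed.

End DiagonalStein.

Definition seq_of_row (R : Type) n (v : 'rV[R]_n.+1) (m : nat) : R := v 0 (inord m).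

Section CauchyCongruence.
Variables (R : realType) (n : nat) (b g : 'rV[R]_n.+1) (a : R).
Hypotheses (b_lt1 : forall i, `|b 0 i| < 1) (b_inj : forall i j, i != j -> b 0 i != b 0 j).
Hypotheses (b_neq0 : forall i, b 0 i != 0) (g_neq0 : forall i, g 0 i != 0).

Let J := diag_mx g *m (a *: cauchy_mx b - const_mx 1) *m diag_mx g.
Let bs := seq_of_row b.
Let gx (x : 'cV[R]_n.+1) := seq_of_row (\row_i (g 0 i * x i 0)).

Lemma seq_of_row_lt1 m : `|bs m| < 1.
Proof. exact: b_lt1. Qed.

Lemma seq_of_row_distinct : distinct_nodes bs n.+1.
Proof.
move=> i j lt_i lt_j neq_ij; apply: b_inj; apply: contra neq_ij.
by move=> /eqP/(congr1 val) /=; rewrite !inordK // => ->.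
Qed.

Lemma cauchy_congr_tr : J^T = J.
Proof.
apply/matrixP => i j; rewrite /J mxE !mul_diag_mx_diagE !mxE.
by rewrite (mulrC (b 0 j)); ring.
Qed.

Lemma cauchy_congr_quad (x : 'cV[R]_n.+1) :
  (x^T *m J *m x) 0 0 = a * cauchy_form bs n.+1 (gx x) - coord_sum n.+1 (gx x) ^+ 2.
Proof.
have -> : coord_sum n.+1 (gx x) ^+ 2 = \sum_(i < n.+1) \sum_(j < n.+1) gx x i * gx x j.
  by rewrite expr2 mulr_suml; apply: eq_bigr => i _; rewrite mulr_sumr.
rewrite /cauchy_form mulr_sumr -sumrB mxE.
under eq_bigr => j _ do rewrite mxE mulr_suml.
rewrite exchange_big /=; apply: eq_bigr => i _.
rewrite mulr_sumr -sumrB; apply: eq_bigr => j _.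
rewrite /J mul_diag_mx_diagE /gx /bs /seq_of_row !mxE !inord_val.
by ring.
Qed.

Lemma prod_sqr_seq_of_row : prod_sqr bs n.+1 = \prod_i b 0 i ^+ 2.
Proof. by apply: eq_bigr => i _; rewrite /bs /seq_of_row inord_val. Qed.

Lemma cauchy_congr_quad_gt0 (x : 'cV[R]_n.+1) : 1 - \prod_i b 0 i ^+ 2 < a -> x != 0 ->
  0 < (x^T *m J *m x) 0 0.
Proof.
rewrite -prod_sqr_seq_of_row cauchy_congr_quad => lt_a x_neq0.
have S2_le := coord_sum_sqr_le seq_of_row_lt1 n.+1 (gx x).
have Q_gt0 : 0 < cauchy_form bs n.+1 (gx x).
  rewrite lt_def (cauchy_form_ge0 seq_of_row_lt1) andbT.
  apply: contra x_neq0 => /eqP Q0; apply/eqP/matrixP => i j; rewrite (ord1 j) !mxE.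
  have /eqP := cauchy_form_eq0 seq_of_row_lt1 seq_of_row_distinct Q0 (ltn_ord i).
  by rewrite /gx /seq_of_row inord_val !mxE mulf_eq0 (negbTE (g_neq0 i)) => /eqP.
by move: S2_le Q_gt0 lt_a; set Q := cauchy_form _ _ _; set P := prod_sqr _ _; nra.
Qed.

Lemma cauchy_congr_quad_le0 : a <= 1 - \prod_i b 0 i ^+ 2 ->
  exists2 x : 'cV[R]_n.+1, x != 0 & (x^T *m J *m x) 0 0 <= 0.
Proof.
rewrite -prod_sqr_seq_of_row => a_le.
have bs_neq0 i : (i < n.+1)%N -> bs i != 0 by move=> _; exact: b_neq0.
have [y [i0 lt_i0 y_i0] ext_y] :=
  coord_sum_sqr_extremal seq_of_row_lt1 seq_of_row_distinct bs_neq0 (ltn0Sn n).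
pose x : 'cV[R]_n.+1 := \col_i (y i / g 0 i).
have gx_y m : (m < n.+1)%N -> gx x m = y m.
  by move=> lt_m; rewrite /gx /seq_of_row !mxE inordK // mulrCA mulfV ?mulr1.
exists x.
  apply: contra y_i0 => /eqP/matrixP/(_ (inord i0) 0); rewrite !mxE inordK // => /eqP.
  by rewrite mulf_eq0 invr_eq0 (negbTE (g_neq0 _)) orbF.
rewrite cauchy_congr_quad (eq_cauchy_form _ gx_y) (eq_coord_sum gx_y) ext_y.
have := cauchy_form_ge0 seq_of_row_lt1 n.+1 y.
by move: a_le; set Q := cauchy_form _ _ _; set P := prod_sqr _ _; nra.
Qed.

Lemma posdef_cauchy_congr : posdef J <-> 1 - \prod_i b 0 i ^+ 2 < a.
Proof.
split=> [[_ J_pos] | lt_a].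
  rewrite ltNge; apply/negP => /cauchy_congr_quad_le0 [x x_neq0].
  by rewrite leNgt J_pos.
by split=> [|x]; [exact: cauchy_congr_tr | exact: cauchy_congr_quad_gt0].
Qed.

End CauchyCongruence.

Lemma prod_inv_sqr_ltP (R : realFieldType) n (lam : 'rV[R]_n) (c : R) :
  (forall j, lam 0 j != 0) -> 0 < c ->
  1 - \prod_i (lam 0 i)^-1 ^+ 2 < 1 - c^-1 <-> `|\det (diag_mx lam)| ^+ 2 < c.
Proof.
move=> lam_neq0 c_gt0; rewrite ltrD2l ltrN2 det_diag real_normK ?num_real //.
have P_gt0 : 0 < \prod_i lam 0 i ^+ 2.
  by apply: prodr_gt0 => i _; rewrite exprn_even_gt0 //= lam_neq0 orbT.
under eq_bigr do rewrite exprVn.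
by rewrite prodfV ltf_pV2 ?posrE // prodrXl.
Qed.

Lemma ln_prod (R : realType) n (f : 'I_n -> R) : (forall i, 0 < f i) ->
  \sum_i ln (f i) = ln (\prod_i f i).
Proof.
move=> f_gt0; suff [] : \sum_i ln (f i) = ln (\prod_i f i) /\ 0 < \prod_i f i by [].
elim/big_rec2: _ => [|i s P _ [-> P_gt0]]; first by rewrite ln1.
by rewrite lnM ?posrE ?mulr_gt0.
Qed.

Lemma sqr_det_diag_lt_ln (R : realType) n (lam : 'rV[R]_n) (c : R) :
  (forall j, lam 0 j != 0) -> 0 < c ->
  `|\det (diag_mx lam)| ^+ 2 < c <-> \sum_j ln `|lam 0 j| < ln c / 2.
Proof.
move=> lam_neq0 c_gt0; rewrite ln_prod => [|j]; last by rewrite normr_gt0.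
rewrite det_diag normr_prod; set P := \prod_j `|lam 0 j|.
have P_gt0 : 0 < P by apply: prodr_gt0 => j _; rewrite normr_gt0.
rewrite -ltr_ln ?posrE ?exprn_gt0 // lnXn // mulr2n.
by split=> ?; lra.
Qed.

Unset Implicit Arguments.

Theorem mainTheorem6 (R : realType) (k : nat) (hk : (0 < k)%N)
  (lam : 'rV[R]_k) (h p : R) (Gam : 'rV[R]_k) (J M : 'M[R]_k) :
  (forall i j : 'I_k, i != j -> lam 0 i != lam 0 j) ->
  (forall j : 'I_k, 1 < `|lam 0 j|) ->
  h != 0 -> 0 <= p ->
  (forall j : 'I_k, Gam 0 j != 0) ->
  J = invmx (diag_mx lam) *m J *m (invmx (diag_mx lam))^T
      - (1 + h ^+ 2 * p)^-1 *: (Gam^T *m Gam)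
      + invmx (diag_mx lam) *m Gam^T *m Gam *m (invmx (diag_mx lam))^T ->
  M = invmx (diag_mx lam) *m M *m (invmx (diag_mx lam))^T + const_mx 1 ->
  [/\ J = diag_mx Gam *m ((h ^+ 2 * p / (1 + h ^+ 2 * p)) *: M - const_mx 1)
          *m diag_mx Gam,
      posdef J <-> `|\det (diag_mx lam)| ^+ 2 < 1 + h ^+ 2 * p
    & posdef J <-> \sum_(j < k) ln `|lam 0 j| < ln (1 + h ^+ 2 * p) / 2].
Proof.
case: k hk lam Gam J M => [//|n] _ lam Gam J M lam_inj lam_gt1 _ p_ge0 Gam_neq0 eqJ eqM.
set c := 1 + h ^+ 2 * p in eqJ *.
have c_gt0 : 0 < c by rewrite (lt_le_trans ltr01) // lerDl mulr_ge0 ?sqr_ge0.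
have hp_c : h ^+ 2 * p / c = 1 - c^-1.
  by have := lt0r_neq0 c_gt0; rewrite /c => c_neq0; field.
have lam_neq0 j : lam 0 j != 0 by rewrite -normr_gt0 (lt_trans ltr01).
set b := \row_i (lam 0 i)^-1.
have b_lt1 i : `|b 0 i| < 1 by rewrite mxE normfV invf_lt1 ?normr_gt0.
have b_den i j : 1 - b 0 i * b 0 j != 0 by exact: oneBM_neq0.
have b_inj i j : i != j -> b 0 i != b 0 j by move/lam_inj; rewrite !mxE (inj_eq invr_inj).
have b_neq0 i : b 0 i != 0 by rewrite mxE invr_eq0.
move: eqJ eqM; rewrite invmx_diag // tr_diag_mx -/b.
move=> /(stein_gram_solution b_den (lt0r_neq0 c_gt0)) eqJ /(stein_ones_solution b_den) eqM.
have posdefJ : posdef J <-> `|\det (diag_mx lam)| ^+ 2 < c.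
  rewrite eqJ posdef_cauchy_congr // -prod_inv_sqr_ltP //.
  by under eq_bigr do rewrite mxE.
split; first by rewrite eqJ eqM hp_c.
- exact: posdefJ.
- exact: iff_trans posdefJ (sqr_det_diag_lt_ln lam_neq0 c_gt0).
Qed.
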